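(* Let $F$ be an unsatisfiable formula and $\mathcal{P}$ a subproblem for $F$ admitting a compatible proof. Then every compatible proof $(L^0,\dots,L^n)$ of $\mathcal{P}$ contains at least $$\min\{\#S - 1 \mid S \subseteq \mathrm{Frontier}[\mathrm{Known}(\mathcal{P})],\ S \text{ is unsatisfiable}\}$$ clauses in $L^0 \cup \cdots \cup L^n$ that do not belong to $\mathrm{Known}(\mathcal{P})$.
   Context: Clauses are finite sets of literals without complementary pairs; $\bot$ is the empty clause; a formula (set of clauses) is unsatisfiable if no truth assignment satisfies all its clauses. Resolution: for $A = C' \cup \{x\}$, $B = C'' \cup \{\bar{x}\}$ with $C' \cup C''$ containing no complementary pair, $A \diamond B := C' \cup C''$. The frontier of a set of clauses $G$ is $\mathrm{Frontier}[G] := \{\omega \in G \mid \text{there is no } \omega' \in G \text{ with } \omega' \subsetneq \omega\}$. Layer list on an unsatisfiable formula $F$: a sequence $(L^0,\dots,L^n)$, $n\ge 1$, of sets of clauses with $L^j\neq\emptyset$ for $j \ge 1$, such that (1) $L^0 = F$; (2) $\bot \in L^k$ for some $1 \le k \le n$; (3) for all $1\le j\le n$, every $\omega \in L^j$ equals $\omega'\diamond\omega''$ for some $\omega' \in L^{j-1}$, $\omega'' \in L^0\cup\cdots\cup L^{j-1}$; (4) for all $1 \le k < j \le n$, no $\omega \in L^j$ equals $\omega'\diamond\omega''$ with $\omega' \in L^{k-1}$, $\omega'' \in L^0\cup\cdots\cup L^{k-1}$. A subproblem for $F$ is a tuple $\mathcal{P} = (\mathrm{Prev}, \mathrm{Cur},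 \mathrm{Next}, \mathrm{Forg})$ of four sets of clauses; $\mathrm{Known}(\mathcal{P}) = \mathrm{Prev} \cup \mathrm{Cur} \cup \mathrm{Next}$. A compatible proof of $\mathcal{P}$ is a layer list $(L^0,\dots,L^n)$ on $F$ such that for some index $k < n$: $L^k = \mathrm{Cur}$, $L^0 \cup \cdots \cup L^{k-1} = \mathrm{Prev}$, $L^{k+1} \supseteq \mathrm{Next}$, and no clause of $\mathrm{Forg}$ occurs in any layer. *)

From HB Require Import structures.
From mathcomp Require Import all_boot all_order.
From mathcomp Require Import finmap.
From Stdlib Require Import ClassicalEpsilon.
Set Implicit Arguments. Unset Strict Implicit. Unset Printing Implicit Defensive.
Local Open Scope fset_scope.

(* Propositional variables range over an arbitrary choiceType V.
   A literal is a pair (v, b): b = true is the positive literal v,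
   b = false the negative literal ~v. *)
Definition lit (V : choiceType) := (V * bool)%type.
Definition negl (V : choiceType) (x : lit V) : lit V := (x.1, ~~ x.2).

Definition clause (V : choiceType) := {fset lit V}.
Definition no_comp_pair (V : choiceType) (C : clause V) : Prop :=
  forall x, x \in C -> negl x \notin C.
Definition is_clause_set (V : choiceType) (G : {fset clause V}) : Prop :=
  forall C, C \in G -> no_comp_pair C.

Definition bot_clause (V : choiceType) : clause V := fset0.

Definition sat_clause (V : choiceType) (a : V -> bool) (C : clause V) : Prop :=
  exists2 x, x \in C & a x.1 = x.2.
Definition unsat (V : choiceType) (G : {fset clause V}) : Prop :=
  forall a : V -> bool, exists2 C, C \in G & ~ sat_clause a C.

Definition resolvent (V : choiceType) (A B C : clause V) : Prop :=
  exists x : lit V, [/\ x \in A, negl x \in B,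
    no_comp_pair ((A `\ x) `|` (B `\ negl x)) &
    C = (A `\ x) `|` (B `\ negl x)].

Definition frontier (V : choiceType) (G : {fset clause V}) : {fset clause V} :=
  [fset w in G | ~~ has (fun w' => w' `<` w) G].

(* Layer list: L = [:: L^0; ...; L^n], n = size L - 1. *)
Definition layer (V : choiceType) (L : seq {fset clause V}) (j : nat) :=
  nth fset0 L j.
Definition layers_below (V : choiceType) (L : seq {fset clause V}) (j : nat)
  : {fset clause V} := \bigcup_(i <- iota 0 j) layer L i.
Definition all_layers (V : choiceType) (L : seq {fset clause V}) : {fset clause V} :=
  \bigcup_(X <- L) X.

Definition is_layer_list (V : choiceType) (F : {fset clause V})
  (L : seq {fset clause V}) : Prop :=
  let n := (size L).-1 in
  [/\ (1 <= n /\ forall j, 1 <= j <= n -> layer L j != fset0),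
      layer L 0 = F,
      (exists k, 1 <= k <= n /\ bot_clause V \in layer L k),
      (forall j, 1 <= j <= n -> forall w, w \in layer L j ->
         exists w' w'', [/\ w' \in layer L j.-1, w'' \in layers_below L j &
                            resolvent w' w'' w]) &
      (forall k j, 1 <= k -> k < j -> j <= n -> forall w, w \in layer L j ->
         ~ exists w' w'', [/\ w' \in layer L k.-1, w'' \in layers_below L k &
                              resolvent w' w'' w])].

Record subproblem (V : choiceType) := Subproblem {
  Prev : {fset clause V}; Cur : {fset clause V};
  Next : {fset clause V}; Forg : {fset clause V} }.
Definition Known (V : choiceType) (P : subproblem V) : {fset clause V} :=
  Prev P `|` Cur P `|` Next P.

Definition compatible_proof (V : choiceType) (F : {fset clause V})
  (P : subproblem V) (L : seq {fset clause V}) : Prop :=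
  is_layer_list F L /\
  exists k, [/\ k < (size L).-1, layer L k = Cur P,
    layers_below L k = Prev P, Next P `<=` layer L k.+1 &
    forall j, j <= (size L).-1 -> [disjoint Forg P & layer L j]].

(* Subsets that
   are not unsatisfiable contribute the value #|Frontier|, an upper bound for
   every candidate #S - 1, so they never lower the minimum; likewise the
   neutral element #|Frontier| is irrelevant whenever some candidate exists. *)
Definition min_unsat_frontier (V : choiceType) (P : subproblem V) : nat :=
  let Fr := frontier (Known P) in
  \big[minn/#|` Fr|]_(S <- fpowerset Fr)
     (if excluded_middle_informative (unsat S) then #|` S| - 1 else #|` Fr|).

(* Induct on the number of derived clauses outside Known(P).  A derived clause w
   of least first-occurrence layer is a resolvent of two Known clauses A, B.  If
   an unsatisfiable S' inside the frontier of Known(P) + w uses w, replace w by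
   frontier clauses A' <= A and B' <= B: any assignment satisfying A' and B'
   satisfies A and B, hence w by soundness of resolution.  This costs at most one
   extra clause per derived clause, and the induction starts from the singleton
   of the empty clause. *)

From mathcomp Require Import all_boot all_order finmap.
From Stdlib Require Import Classical.
From mathcomp Require Import zify.
Local Open Scope fset_scope.
Set Implicit Arguments.
Unset Strict Implicit.

Section FrontierCores.
Variable V : choiceType.
Implicit Types (G N S : {fset clause V}) (A B C w : clause V).

Lemma sat_resolvent a A B C :
  resolvent A B C -> sat_clause a A -> sat_clause a B -> sat_clause a C.
Proof.
move=> [x [xA nxB _ ->]] [y yA ay] [z zB az].
have [exy | nexy] := eqVneq y x; last first.
  by exists y => //; rewrite in_fsetU !in_fsetD1 nexy yA.
have [ezx | nezx] := eqVneq z (negl x); last first.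
  by exists z => //; rewrite in_fsetU !in_fsetD1 nezx zB orbT.
by move: az; rewrite ezx -exy /negl /= ay; case: (y.2).
Qed.

Lemma sat_clause_fsubset a A B : A `<=` B -> sat_clause a A -> sat_clause a B.
Proof. by move=> /fsubsetP sAB [x xA ax]; exists x => //; apply: sAB. Qed.

Lemma mem_frontier G w :
  (w \in frontier G) = (w \in G) && ~~ has (fun w' => w' `<` w) G.
Proof. by rewrite /frontier !inE. Qed.

Lemma frontier_subsumes G A : A \in G -> exists2 A', A' \in frontier G & A' `<=` A.
Proof.
elim: {A}_.+1 {-2}A (ltnSn #|` A|) => // m IH A ltAm AG.
have [/hasP[A1 A1G ltA1A] | minA] := boolP (has (fun w' => w' `<` A) G).
  have [A' fA' sA'] := IH A1 (leq_trans (fproper_ltn_card ltA1A) ltAm) A1G.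
  by exists A' => //; apply: fsubset_trans sA' (fproper_sub ltA1A).
by exists A; rewrite ?mem_frontier ?AG.
Qed.

Lemma frontier_fsetU1 G n w : w \in frontier (n |` G) -> w != n -> w \in frontier G.
Proof.
rewrite !mem_frontier in_fsetU in_fset1 => /andP[/orP[/eqP-> | wG] minw] wn.
  by rewrite eqxx in wn.
rewrite wG; apply: contra minw => /hasP[w' w'G ltw']; apply/hasP.
by exists w'; rewrite // in_fsetU w'G orbT.
Qed.

Definition frontier_core G m :=
  exists S, [/\ S `<=` frontier G, unsat S & #|` S| <= m].

Lemma frontier_core_bot G : bot_clause V \in G -> frontier_core G 1.
Proof.
move=> botG; exists [fset bot_clause V]; split; last by rewrite cardfs1.
- apply/fsubsetP => _ /fset1P->; rewrite mem_frontier botG /=.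
  by apply/hasP => -[w _]; rewrite fproperEneq fsubset0 => /andP[/negbTE->].
- by move=> a; exists (bot_clause V); rewrite ?fset11 // => -[y]; rewrite in_fset0.
Qed.

Lemma frontier_core_resolvent G A B w m : A \in G -> B \in G -> resolvent A B w ->
  frontier_core (w |` G) m -> frontier_core G m.+1.
Proof.
move=> AG BG resw [S' [/fsubsetP sS' unsatS' cardS']].
have [wS' | wS'] := boolP (w \in S'); last first.
  exists S'; split => //; last exact: leqW.
  apply/fsubsetP => x xS'; apply: frontier_fsetU1 (sS' x xS') _.
  by apply: contraNneq wS' => <-.
have [A' fA' sA'] := frontier_subsumes AG.
have [B' fB' sB'] := frontier_subsumes BG.
exists ((S' `\ w) `|` [fset A'; B']); split.
- apply/fsubsetP => x; rewrite in_fsetU in_fsetD1 in_fset2.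
  case/orP => [/andP[xw xS'] | /orP[] /eqP-> //].
  exact: frontier_fsetU1 (sS' x xS') xw.
- move=> a; have [C CS' unsatC] := unsatS' a.
  have [Cw | Cw] := eqVneq C w; last first.
    by exists C => //; rewrite in_fsetU in_fsetD1 Cw CS'.
  have [satA' | ?] := classic (sat_clause a A'); last first.
    by exists A' => //; rewrite in_fsetU in_fset2 eqxx orbT.
  have [satB' | ?] := classic (sat_clause a B'); last first.
    by exists B' => //; rewrite in_fsetU in_fset2 eqxx !orbT.
  case: unsatC; rewrite Cw; apply: (sat_resolvent resw).
    exact: sat_clause_fsubset sA' satA'.
  exact: sat_clause_fsubset sB' satB'.
- move: cardS'; rewrite cardfsU (cardfsD1 w S') wS' cardfs2; case: (A' != B'); lia.
Qed.

Definition ranked_derivation (r : clause V -> nat) G N :=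
  forall w, w \in N -> w \notin G -> exists A B, [/\ resolvent A B w,
    A \in G \/ (A \in N /\ r A < r w) & B \in G \/ (B \in N /\ r B < r w)].

Lemma ranked_derivation_fsetU1 r G N w :
  ranked_derivation r G N -> ranked_derivation r (w |` G) N.
Proof.
move=> der w' w'N; rewrite in_fsetU in_fset1 negb_or => /andP[_ w'G].
have [A [B [resw' premA premB]]] := der w' w'N w'G.
have widen X : X \in G \/ (X \in N /\ r X < r w') ->
    X \in w |` G \/ (X \in N /\ r X < r w').
  by case=> [XG | ?]; [left; rewrite in_fsetU in_fset1 XG orbT | right].
by exists A, B; split; try apply: widen.
Qed.

Lemma ranked_derivation_first_step r G N w0 : ranked_derivation r G N -> w0 \in N `\` G ->
  exists w A B, [/\ w \in N `\` G, A \in G, B \in G & resolvent A B w].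
Proof.
move=> der w0new.
have exrank : exists k, has (fun w => r w == k) (N `\` G).
  by exists (r w0); apply/hasP; exists w0.
have [k /hasP[w wnew /eqP rwk] mink] := ex_minnP exrank.
have /fsetDP[wN wG] := wnew.
have [A [B [resw premA premB]]] := der w wN wG.
have inG X : X \in G \/ (X \in N /\ r X < r w) -> X \in G.
  case=> [// | [XN ltXw]]; apply: contraTT ltXw => XG; rewrite -leqNgt rwk.
  by apply: mink; apply/hasP; exists X; rewrite ?in_fsetD ?XG.
by exists w, A, B; split; try exact: inG.
Qed.

Lemma frontier_core_derivation r G N : ranked_derivation r G N ->
  bot_clause V \in G `|` N -> frontier_core G #|` N `\` G|.+1.
Proof.
move cardm: #|` N `\` G| => m; elim: m G cardm => [|m IH] G cardm der botGN.
  apply: frontier_core_bot; move: botGN; rewrite in_fsetU.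
  case/orP => // botN; apply: contraT => botG.
  move/eqP: cardm; rewrite cardfs_eq0 => /eqP noNew.
  by have := in_fset0 (bot_clause V); rewrite -noNew in_fsetD botN (negbTE botG).
have [w0 w0new] : exists w0, w0 \in N `\` G.
  by case: (fset_0Vmem (N `\` G)) => [e0 | [w0 ?]]; [rewrite e0 cardfs0 in cardm | exists w0].
have [w [A [B [wnew AG BG resw]]]] := ranked_derivation_first_step der w0new.
apply: (frontier_core_resolvent AG BG resw); apply: IH.
- by move: cardm; rewrite (cardfsD1 w) wnew fsetDDl (fsetUC G) => -[].
- exact: ranked_derivation_fsetU1.
- by move: botGN; rewrite !in_fsetU => /orP[] ->; rewrite ?orbT.
Qed.

End FrontierCores.

Section LayerLists.
Variable V : choiceType.
Implicit Types (F G : {fset clause V}) (L : seq {fset clause V}) (w : clause V).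

Definition first_layer L w := find (fun X : {fset clause V} => w \in X) L.

Lemma mem_all_layers L i w : i < size L -> w \in layer L i -> w \in all_layers L.
Proof. by move=> ltiL wi; apply/bigfcupP; exists (layer L i); rewrite ?mem_nth. Qed.

Lemma first_layer_le L i w : w \in layer L i -> first_layer L w <= i.
Proof. by move=> wi; rewrite leqNgt; apply/negP => /(before_find fset0); rewrite wi. Qed.

Lemma first_layerP L w : w \in all_layers L ->
  first_layer L w < size L /\ w \in layer L (first_layer L w).
Proof.
case/bigfcupP => X /andP[XL _] wX.
have hasw : has (fun X : {fset clause V} => w \in X) L by apply/hasP; exists X.
by split; [rewrite /first_layer -has_find | exact: (nth_find fset0 hasw)].
Qed.

Lemma layer_list_bot F L : is_layer_list F L -> bot_clause V \in all_layers L.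
Proof.
case=> [[n_ge1 _] _ [k [/andP[_ le_kn] botk]] _ _].
by apply: mem_all_layers botk; move: le_kn n_ge1; lia.
Qed.

Lemma layer_list_ranked_derivation F G L : is_layer_list F L -> F `<=` G ->
  ranked_derivation (first_layer L) G (all_layers L).
Proof.
case=> [_ L0 _ resolved _] /fsubsetP sFG w wL wG.
have [ltjL wj] := first_layerP wL.
have j_gt0 : 0 < first_layer L w.
  by rewrite lt0n; apply: contraNneq wG => j0; apply: sFG; rewrite -L0 -j0.
have j_range : 0 < first_layer L w <= (size L).-1.
  by rewrite j_gt0 -ltnS prednK // (leq_ltn_trans _ ltjL).
have [A [B [Ain Bin resw]]] := resolved _ j_range w wj.
have premise X i : i < first_layer L w -> X \in layer L i ->
    X \in G \/ (X \in all_layers L /\ first_layer L X < first_layer L w).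
  move=> ltij Xi; have [XG | XG] := boolP (X \in G); [by left | right].
  split; last exact: leq_ltn_trans (first_layer_le Xi) ltij.
  exact: mem_all_layers (ltn_trans ltij ltjL) Xi.
exists A, B; split => //; first by apply: premise Ain; rewrite prednK.
by case/bigfcupP: Bin => i /andP[]; rewrite mem_iota => /= ltij _; apply: premise.
Qed.

Lemma compatible_proof_fsubset_Known F P L : compatible_proof F P L -> F `<=` Known P.
Proof.
case=> [[_ <- _ _ _] [k [_ Lk Lb _ _]]]; apply/fsubsetP => w w0.
rewrite /Known !in_fsetU; case: k Lk Lb => [Lk _ | k _ <-]; first by rewrite -Lk w0 orbT.
by apply/orP; left; apply/orP; left; apply/bigfcupP; exists 0; rewrite // mem_iota.
Qed.

End LayerLists.

Lemma bigminn_le_seq (T : eqType) (s : seq T) (f : T -> nat) d x :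
  x \in s -> \big[minn/d]_(y <- s) f y <= f x.
Proof.
elim: s => //= y s IH; rewrite in_cons big_cons => /orP[/eqP-> | xs].
  exact: geq_minl.
exact: leq_trans (geq_minr _ _) (IH xs).
Qed.

Lemma min_unsat_frontier_le (V : choiceType) (P : subproblem V) S :
  S `<=` frontier (Known P) -> unsat S -> min_unsat_frontier P <= #|` S| - 1.
Proof.
move=> sS unsatS; rewrite /min_unsat_frontier /=.
have SFr : S \in fpowerset (frontier (Known P)) by rewrite fpowersetE.
apply: leq_trans (bigminn_le_seq _ _ SFr) _.
by case: ClassicalEpsilon.excluded_middle_informative.
Qed.

Theorem lemma2 (V : choiceType) (F : {fset clause V}) (P : subproblem V) :
  is_clause_set F -> unsat F ->
  is_clause_set (Prev P) -> is_clause_set (Cur P) ->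
  is_clause_set (Next P) -> is_clause_set (Forg P) ->
  (exists L0, compatible_proof F P L0) ->
  forall L : seq {fset clause V}, compatible_proof F P L ->
    min_unsat_frontier P <= #|` all_layers L `\` Known P|.
Proof.
move=> _ _ _ _ _ _ _ L compL.
have Llist : is_layer_list F L by case: compL.
have der := layer_list_ranked_derivation Llist (compatible_proof_fsubset_Known compL).
have botKL : bot_clause V \in Known P `|` all_layers L.
  by rewrite in_fsetU (layer_list_bot Llist) orbT.
have [S [sS unsatS cardS]] := frontier_core_derivation der botKL.
by apply: leq_trans (min_unsat_frontier_le sS unsatS) _; rewrite leq_subLR add1n.
Qed.
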